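(* Let $m,n\ge 2$ and let $G$ be the ordered graph with vertices $v_1<\dots<v_{m+n}$ whose only edges are $v_1v_{m+n}$ and $v_mv_{m+1}$ (two nested edges: one joining the outermost vertices and one joining the innermost vertices of the parts $\{v_1,\dots,v_m\}$ and $\{v_{m+1},\dots,v_{m+n}\}$). Then $R(G)=2m+2n-2$.
   Context: An ordered graph is a graph together with a specified linear ordering of its vertex set. An ordered graph $G$ is contained in an ordered graph $H$ if there is an order-preserving injection $V(G)\to V(H)$ mapping edges to edges. $R(G)$ denotes the 2-color ordered Ramsey number: the minimum $N$ such that every 2-coloring of the edges of the ordered complete graph on $N$ vertices contains a monochromatic copy of $G$. *)

From mathcomp Require Import all_boot.
Set Implicit Arguments. Unset Strict Implicit. Unset Printing Implicit Defensive.

(* An ordered graph on k vertices: vertex set 'I_k with its natural order,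
   edges given by a (symmetric, irreflexive) boolean relation E. *)
Definition ordered_graph (k : nat) := rel 'I_k.

(* A 2-colouring of the edges of the ordered complete graph on 'I_N:
   the edge {u,v} with u < v receives colour c u v (values of c on
   pairs u >= v are irrelevant). *)
Definition coloring (N : nat) := 'I_N -> 'I_N -> bool.

Definition mono_copy (k N : nat) (G : ordered_graph k) (c : coloring N) (b : bool) :=
  exists f : 'I_k -> 'I_N,
    (forall i j : 'I_k, i < j -> f i < f j) /\
    (forall i j : 'I_k, i < j -> G i j -> c (f i) (f j) = b).

Definition ramsey_arrows (k : nat) (G : ordered_graph k) (N : nat) :=
  forall c : coloring N, exists b : bool, mono_copy G c b.

Definition is_ordered_ramsey_number (k : nat) (G : ordered_graph k) (r : nat) :=
  ramsey_arrows G r /\ forall N, N < r -> ~ ramsey_arrows G N.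

(* The graph of Proposition 4.1: vertices v_1 < ... < v_{m+n} are indices
   0 .. m+n-1; edges v_1 v_{m+n} (indices 0, m+n-1) and v_m v_{m+1}
   (indices m-1, m). *)
Definition nested_two_edges (m n : nat) : ordered_graph (m + n) :=
  fun i j =>
    let e x y := ((val i == x) && (val j == y)) || ((val i == y) && (val j == x)) in
    e 0 (m + n - 1) || e (m - 1) m.

From mathcomp Require Import all_boot zify.

(* A copy of the graph in a 2-coloured ordered complete graph is the same
   thing as two nested edges [a, d] and [x, y] of one colour with at least
   m - 1 vertices in [a, x) and n - 1 in (y, d].  On 2m + 2n - 2 vertices the
   edges {1, N}, {m, N - n + 1} and {2m - 1, 2m} are pairwise nested in this
   way, so two of them share a colour.  On fewer vertices, colour an edge by
   whether its length is at least m + n - 1: a long inner edge leaves no room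
   for the outer one, and a short outer edge has no room for the inner one. *)

Lemma bool_pigeonhole (b1 b2 b3 : bool) : [\/ b1 = b2, b1 = b3 | b2 = b3].
Proof. by case: b1; case: b2; case: b3; constructor. Qed.

Lemma incr_ord_dist {k N} {f : 'I_k -> 'I_N} :
  (forall i j : 'I_k, i < j -> f i < f j) ->
  forall i j : 'I_k, i <= j -> f i + (j - i) <= f j.
Proof.
move=> f_incr i [j lt_jk]; elim: j lt_jk => [|j IH] lt_jk /= le_ij.
  have -> : i = Ordinal lt_jk by apply: val_inj; rewrite /=; lia.
  by rewrite subnn addn0.
have lt_j : j < k by lia.
have f_step := f_incr (Ordinal lt_j) (Ordinal lt_jk) (ltnSn j).
case: (ltnP j i) => [lt_ji | le_ij'].
  have -> : i = Ordinal lt_jk by apply: val_inj; rewrite /=; lia.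
  by rewrite subnn addn0.
by move: (IH lt_j le_ij') => /=; lia.
Qed.

Section NestedEdges.

Variables m n : nat.
Hypothesis m_ge2 : 1 < m.
Hypothesis n_ge2 : 1 < n.

Local Notation G := (@nested_two_edges m n).

(* Sends v_1..v_{m-1} to a, a+1, ..., v_m to x, v_{m+1} to y and
   v_{m+2}..v_{m+n} to the n - 1 vertices ending at d. *)
Definition nested_embedding (a x y d t : nat) : nat :=
  if t < m - 1 then a + t else if t == m - 1 then x else if t == m then y
  else d + t + 1 - (m + n).

Lemma mono_copy_nestedP N (c : coloring N) (b : bool) :
  mono_copy G c b <->
  exists a x y d : 'I_N,
    [/\ a + (m - 1) <= x, x < y, y + (n - 1) <= d, c a d = b & c x y = b].
Proof.
split.
  move=> [f [f_incr f_edge]].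
  have v1 : 0 < m + n by lia.
  have vm : m - 1 < m + n by lia.
  have vm1 : m < m + n by lia.
  have vmn : m + n - 1 < m + n by lia.
  have dist := incr_ord_dist f_incr.
  exists (f (Ordinal v1)), (f (Ordinal vm)), (f (Ordinal vm1)), (f (Ordinal vmn)).
  split.
  - by have := dist (Ordinal v1) (Ordinal vm) ltac:(rewrite /=; lia); rewrite /=; lia.
  - by apply: f_incr => /=; lia.
  - by have := dist (Ordinal vm1) (Ordinal vmn) ltac:(rewrite /=; lia); rewrite /=; lia.
  - by apply: (f_edge) => /=; [lia | rewrite /nested_two_edges /= !eqxx].
  - by apply: (f_edge) => /=; [lia | rewrite /nested_two_edges /= !eqxx orbT].
move=> [a [x [y [d [ax xy yd cad cxy]]]]].
have emb_lt (i : 'I_(m + n)) : nested_embedding a x y d i < N.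
  by have := ltn_ord i; have := ltn_ord d; rewrite /nested_embedding; repeat case: ifP; lia.
exists (fun i => Ordinal (emb_lt i)); split.
  move=> i j; have := ltn_ord i; have := ltn_ord j; rewrite /= /nested_embedding.
  by repeat case: ifP; lia.
move=> i j lt_ij; have := ltn_ord j; rewrite /nested_two_edges /= => lt_j.
case/orP=> /orP [] /andP [/eqP vi /eqP vj]; try lia; [rewrite -cad | rewrite -cxy].
all: congr (c _ _); apply: val_inj.
all: rewrite /= /nested_embedding ?vi ?vj.
all: by repeat case: ifP; lia.
Qed.

Lemma nested_arrows N : 2 * m + 2 * n - 2 <= N -> ramsey_arrows G N.
Proof.
move=> le_N c.
have copy (a x y d : 'I_N) : c a d = c x y ->
    a + (m - 1) <= x -> x < y -> y + (n - 1) <= d -> exists b, mono_copy G c b.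
  by move=> same ax xy yd; exists (c a d); apply/mono_copy_nestedP; exists a, x, y, d.
have [a1 a2 a3] : [/\ 0 < N, m - 1 < N & 2 * m - 2 < N] by split; lia.
have [d1 d2 d3] : [/\ N - 1 < N, N - n < N & 2 * m - 1 < N] by split; lia.
have [] := bool_pigeonhole (c (Ordinal a1) (Ordinal d1)) (c (Ordinal a2) (Ordinal d2))
  (c (Ordinal a3) (Ordinal d3)) => same.
all: by apply: (copy _ _ _ _ same) => /=; lia.
Qed.

Lemma nested_not_arrows N : N < 2 * m + 2 * n - 2 -> ~ ramsey_arrows G N.
Proof.
move=> lt_N arrows.
have [b /mono_copy_nestedP [a [x [y [d [ax xy yd cad cxy]]]]]] :=
  arrows (fun u v => m + n - 1 <= v - u).
have := ltn_ord d; move: cad cxy; case: b => /= cad cxy; lia.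
Qed.

End NestedEdges.

Theorem proposition4p1 (m n : nat) (hm : 2 <= m) (hn : 2 <= n) :
  @is_ordered_ramsey_number (m + n) (@nested_two_edges m n) (2 * m + 2 * n - 2).
Proof.
split; first exact: nested_arrows.
by move=> N; apply: nested_not_arrows.
Qed.
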